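(* For any parameter $d>1$, every deterministic algorithm that solves the $d$-approximate $1$-region problem must make at least $\log\log n-\log\log(d+1)$ adaptive queries to the sorted input list $X[1,n]$ (in the worst case).
   Context: Logarithms are base $2$. The input is a list $X[1,n]$ whose entries are in $\{0,1\}$, sorted in nondecreasing order; the algorithm accesses it only by adaptive queries, each revealing one entry $X[i]$. A $d$-approximate $1$-region is an interval $R=[s,n]$ (containing the last position $n$) such that at least $\frac{|R|}{d}$ of the numbers in $X[s,n]$ equal $1$, and $[s,n]$ contains all positions $j$ with $X[j]=1$; here $|R|$ is the number of integers in $R$. *)

From Stdlib Require Import Reals Arith List.
Open Scope R_scope.

Definition log2 (x : R) : R := ln x / ln 2.

(* An input of length n is a function X : nat -> bool; only positions
   1..n are meaningful (true = 1, false = 0). *)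

Definition sorted_input (n : nat) (X : nat -> bool) : Prop :=
  forall i j : nat, (1 <= i)%nat -> (i <= j)%nat -> (j <= n)%nat ->
    X i = true -> X j = true.

(* At least one entry equals 1 (otherwise no 1-region exists). *)
Definition has_one (n : nat) (X : nat -> bool) : Prop :=
  exists j : nat, (1 <= j)%nat /\ (j <= n)%nat /\ X j = true.

Definition ones_from (n : nat) (X : nat -> bool) (s : nat) : nat :=
  fold_right (fun j acc => (if X j then 1 else 0) + acc)%nat 0%nat
             (seq s (S n - s)).

Definition approx_region (d : R) (n : nat) (X : nat -> bool) (s : nat) : Prop :=
  (1 <= s)%nat /\ (s <= n)%nat /\
  INR (S n - s) / d <= INR (ones_from n X s) /\
  (forall j : nat, (1 <= j)%nat -> (j <= n)%nat -> X j = true -> (s <= j)%nat).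

(* Deterministic adaptive query algorithm = binary decision tree.
   [Ask i t0 t1] queries X[i] and continues with t0 if X[i] = 0, with t1 if
   X[i] = 1; [Out s] outputs the interval [s,n]. *)
Inductive dtree : Type :=
| Out : nat -> dtree
| Ask : nat -> dtree -> dtree -> dtree.

Definition answer (n : nat) (X : nat -> bool) (i : nat) : bool :=
  if andb (Nat.leb 1 i) (Nat.leb i n) then X i else false.

Fixpoint output (n : nat) (X : nat -> bool) (t : dtree) : nat :=
  match t with
  | Out s => s
  | Ask i t0 t1 => if answer n X i then output n X t1 else output n X t0
  end.

Fixpoint queries (n : nat) (X : nat -> bool) (t : dtree) : nat :=
  match t with
  | Out _ => 0
  | Ask i t0 t1 => S (if answer n X i then queries n X t1 else queries n X t0)
  end.

Definition solves (d : R) (n : nat) (t : dtree) : Prop :=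
  forall X : nat -> bool, sorted_input n X -> has_one n X ->
    approx_region d n X (output n X t).

(* The adversary only answers with threshold inputs, X[j] = 1 exactly for
   j >= p.  While the candidate thresholds form an interval [lo, hi], a query
   either answers uniformly on it or splits it at the queried position, and a
   leaf is correct on all of them only if the ratio (n + 2 - lo) / (n + 1 - hi)
   is at most d + 1.  A split factors the ratio into the ratios of the two
   halves, so by induction, along the subtree making more queries q, the ratio
   is at most (d + 1)^(2^q).  On [1, n] the ratio is n + 1, hence some threshold
   input forces q >= log log n - log log (d + 1). *)

From Stdlib Require Import Reals Lra Lia List.
Open Scope R_scope.

Definition threshold (p : nat) : nat -> bool := fun j => Nat.leb p j.

Lemma sorted_threshold n p : sorted_input n (threshold p).
Proof.
  intros i j _ Hij _ Hi; unfold threshold in *.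
  apply Nat.leb_le in Hi; apply Nat.leb_le; lia.
Qed.

Lemma has_one_threshold n p : (1 <= p)%nat -> (p <= n)%nat -> has_one n (threshold p).
Proof. intros; exists p; unfold threshold; rewrite Nat.leb_refl; auto. Qed.

Lemma count_threshold_seq p k s :
  fold_right (fun j acc => (if threshold p j then 1 else 0) + acc)%nat 0%nat (seq s k)
  = ((s + k) - Nat.max s p)%nat.
Proof.
  revert s; induction k as [|k IH]; intros s; simpl; [lia|].
  rewrite IH; unfold threshold; destruct (Nat.leb_spec p s); lia.
Qed.

Lemma ones_from_threshold n p s : (s <= p)%nat -> (p <= n)%nat ->
  ones_from n (threshold p) s = (S n - p)%nat.
Proof. intros; unfold ones_from; rewrite count_threshold_seq; lia. Qed.

Lemma answer_threshold n p i :
  answer n (threshold p) i = (Nat.leb 1 i && Nat.leb i n && Nat.leb p i)%bool.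
Proof. unfold answer, threshold; now destruct (Nat.leb 1 i && Nat.leb i n)%bool. Qed.

Lemma output_Ask n X i t0 t1 :
  output n X (Ask i t0 t1) = output n X (if answer n X i then t1 else t0).
Proof. simpl; now destruct (answer n X i). Qed.

Lemma queries_Ask n X i t0 t1 :
  queries n X (Ask i t0 t1) = S (queries n X (if answer n X i then t1 else t0)).
Proof. simpl; now destruct (answer n X i). Qed.

Definition tower (d : R) (q : nat) : R := (d + 1) ^ (2 ^ q).

Lemma tower_0 d : tower d 0 = d + 1.
Proof. unfold tower; simpl; ring. Qed.

Lemma tower_S d q : tower d (S q) = tower d q * tower d q.
Proof. unfold tower; rewrite Nat.pow_succ_r', Nat.mul_comm, pow_mult; simpl; ring. Qed.

Lemma tower_ge_1 d q : 0 <= d -> 1 <= tower d q.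
Proof. intros; apply pow_R1_Rle; lra. Qed.

Lemma tower_le d q1 q2 : 0 <= d -> (q1 <= q2)%nat -> tower d q1 <= tower d q2.
Proof. intros; apply Rle_pow; [lra | apply Nat.pow_le_mono_r; lia]. Qed.

Lemma le_tower_S_max d a b c q1 q2 : 0 <= d -> 0 <= c ->
  a <= b * tower d q1 -> b <= c * tower d q2 ->
  a <= c * tower d (S (Nat.max q1 q2)).
Proof.
  intros Hd Hc Hab Hbc.
  pose proof (tower_ge_1 d q1 Hd) as T1; pose proof (tower_ge_1 d q2 Hd) as T2.
  pose proof (tower_le d q1 (Nat.max q1 q2) Hd (Nat.le_max_l _ _)) as M1.
  pose proof (tower_le d q2 (Nat.max q1 q2) Hd (Nat.le_max_r _ _)) as M2.
  rewrite tower_S.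
  apply Rle_trans with (c * tower d q2 * tower d q1); [nra|].
  rewrite Rmult_assoc; apply Rmult_le_compat_l; [lra|].
  apply Rmult_le_compat; lra.
Qed.

Lemma ln_2_pos : 0 < ln 2.
Proof. pose proof ln_lt_2; lra. Qed.

Lemma log2_le x y : 0 < x -> x <= y -> log2 x <= log2 y.
Proof.
  intros Hx Hxy; unfold log2, Rdiv.
  apply Rmult_le_compat_r; [left; apply Rinv_0_lt_compat, ln_2_pos|].
  destruct Hxy as [Hlt | ->]; [left; now apply ln_increasing | lra].
Qed.

(* Also for x <= 0, where Stdlib's ln returns 0. *)
Lemma log2_nonpos x : x <= 1 -> log2 x <= 0.
Proof.
  intros Hx.
  assert (Hln : ln x <= 0).
  { destruct (Rle_or_lt x 0) as [Hneg | Hpos].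
    - unfold ln; destruct (Rlt_dec 0 x); [exfalso; lra | apply Rle_refl].
    - rewrite <- ln_1; destruct Hx as [Hlt | ->]; [left; now apply ln_increasing | lra]. }
  unfold log2, Rdiv; pose proof (Rinv_0_lt_compat _ ln_2_pos); nra.
Qed.

Lemma log2_1 : log2 1 = 0.
Proof. unfold log2; rewrite ln_1; apply Rdiv_0_l. Qed.

Lemma log2_2 : log2 2 = 1.
Proof. unfold log2; field; apply Rgt_not_eq, ln_2_pos. Qed.

Lemma log2_pow x k : 0 < x -> log2 (x ^ k) = INR k * log2 x.
Proof. intros; unfold log2, Rdiv; rewrite ln_pow by assumption; ring. Qed.

Lemma log2_mult x y : 0 < x -> 0 < y -> log2 (x * y) = log2 x + log2 y.
Proof. intros; unfold log2, Rdiv; rewrite ln_mult by assumption; ring. Qed.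

Lemma log2_log2_le_of_le_pow_pow x y q : 2 <= y -> x <= y ^ (2 ^ q) ->
  log2 (log2 x) <= INR q + log2 (log2 y).
Proof.
  intros Hy Hxy.
  assert (Hlogy : 1 <= log2 y) by (rewrite <- log2_2; apply log2_le; lra).
  assert (Hloglogy : 0 <= log2 (log2 y)) by (rewrite <- log2_1; apply log2_le; lra).
  pose proof (pos_INR q).
  destruct (Rle_or_lt (log2 x) 1) as [Hlogx | Hlogx].
  { pose proof (log2_nonpos _ Hlogx); lra. }
  assert (Hx : 0 < x).
  { destruct (Rlt_or_le 0 x) as [|Hxneg]; [assumption|].
    pose proof (log2_nonpos x ltac:(lra)); lra. }
  assert (H2q : 0 < 2 ^ q) by (apply pow_lt; lra).
  assert (Hlogx_le : log2 x <= 2 ^ q * log2 y).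
  { replace (2 ^ q) with (INR (2 ^ q)) by (rewrite pow_INR; simpl; f_equal; ring).
    rewrite <- log2_pow by lra; apply log2_le; assumption. }
  apply Rle_trans with (log2 (2 ^ q * log2 y)); [apply log2_le; lra|].
  rewrite log2_mult, log2_pow, log2_2 by lra; lra.
Qed.

Section Adversary.

Variables (d : R) (n : nat) (d_pos : 0 < d).

(* approx_region on threshold inputs, where [s, n] contains n + 1 - p ones. *)
Definition correct_on (t : dtree) (lo hi : nat) : Prop :=
  forall p, (lo <= p)%nat -> (p <= hi)%nat ->
    (output n (threshold p) t <= p)%nat /\
    INR n + 1 - INR (output n (threshold p) t) <= d * (INR n + 1 - INR p).

Definition has_slow_threshold (t : dtree) (lo hi : nat) : Prop :=
  exists p, (lo <= p)%nat /\ (p <= hi)%nat /\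
    INR n + 2 - INR lo <= (INR n + 1 - INR hi) * tower d (queries n (threshold p) t).

Lemma solves_correct_on t : solves d n t -> correct_on t 1 n.
Proof.
  intros Ht p Hp1 Hpn.
  destruct (Ht _ (sorted_threshold n p) (has_one_threshold n p Hp1 Hpn))
    as [_ [Hsn [Hdens Hcover]]].
  set (s := output n (threshold p) t) in *.
  assert (Hsp : (s <= p)%nat).
  { apply Hcover; auto; unfold threshold; apply Nat.leb_refl. }
  split; [exact Hsp|].
  rewrite ones_from_threshold, !minus_INR, S_INR in Hdens by lia.
  apply Rmult_le_compat_r with (r := d) in Hdens; [|lra].
  unfold Rdiv in Hdens; rewrite Rmult_assoc, Rinv_l in Hdens by lra; lra.
Qed.

Lemma correct_on_sub t lo hi lo' hi' : (lo <= lo')%nat -> (hi' <= hi)%nat ->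
  correct_on t lo hi -> correct_on t lo' hi'.
Proof. intros Hlo Hhi Ht p Hp1 Hp2; apply Ht; lia. Qed.

Lemma correct_on_branch i t0 t1 lo hi (b : bool) :
  (forall p, (lo <= p)%nat -> (p <= hi)%nat -> answer n (threshold p) i = b) ->
  correct_on (Ask i t0 t1) lo hi -> correct_on (if b then t1 else t0) lo hi.
Proof.
  intros Hb Ht p Hp1 Hp2; rewrite <- (Hb p Hp1 Hp2), <- output_Ask; auto.
Qed.

Lemma has_slow_threshold_Out s lo hi : (lo <= hi)%nat -> (hi <= n)%nat ->
  correct_on (Out s) lo hi -> has_slow_threshold (Out s) lo hi.
Proof.
  intros Hlohi Hhi Ht.
  destruct (Ht lo) as [Hslo _]; try lia.
  destruct (Ht hi) as [_ Hshi]; try lia.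
  exists hi; split; [lia | split; [lia|]]; simpl in *.
  apply le_INR in Hslo; apply le_INR in Hhi.
  rewrite tower_0; lra.
Qed.

Lemma has_slow_threshold_Ask_uniform i t0 t1 lo hi (b : bool) : (hi <= n)%nat ->
  (forall p, (lo <= p)%nat -> (p <= hi)%nat -> answer n (threshold p) i = b) ->
  has_slow_threshold (if b then t1 else t0) lo hi ->
  has_slow_threshold (Ask i t0 t1) lo hi.
Proof.
  intros Hhi Hb [p [Hp1 [Hp2 Hslow]]].
  exists p; split; [exact Hp1 | split; [exact Hp2|]].
  rewrite queries_Ask, (Hb p Hp1 Hp2).
  eapply Rle_trans; [exact Hslow|].
  apply le_INR in Hhi; apply Rmult_le_compat_l; [lra|].
  apply tower_le; [lra | lia].
Qed.

Lemma has_slow_threshold_Ask_split i t0 t1 lo hi : (i <= n)%nat -> (hi <= n)%nat ->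
  (forall p, (lo <= p)%nat -> (p <= i)%nat -> answer n (threshold p) i = true) ->
  (forall p, (i < p)%nat -> (p <= hi)%nat -> answer n (threshold p) i = false) ->
  has_slow_threshold t1 lo i -> has_slow_threshold t0 (S i) hi ->
  has_slow_threshold (Ask i t0 t1) lo hi.
Proof.
  intros Hin Hhi Hyes Hno [p1 [Hp1 [Hp1' Hslow1]]] [p2 [Hp2 [Hp2' Hslow2]]].
  rewrite S_INR in Hslow2.
  apply le_INR in Hin; apply le_INR in Hhi.
  set (q1 := queries n (threshold p1) t1) in Hslow1.
  set (q2 := queries n (threshold p2) t0) in Hslow2.
  assert (Hboth : INR n + 2 - INR lo <= (INR n + 1 - INR hi) * tower d (S (Nat.max q1 q2))).
  { apply le_tower_S_max with (INR n + 1 - INR i); lra. }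
  destruct (Nat.le_ge_cases q2 q1).
  - exists p1; split; [lia | split; [lia|]].
    rewrite queries_Ask, (Hyes p1 Hp1 Hp1'); fold q1.
    now replace q1 with (Nat.max q1 q2) at 1 by lia.
  - exists p2; split; [lia | split; [lia|]].
    rewrite queries_Ask, (Hno p2 Hp2 Hp2'); fold q2.
    now replace q2 with (Nat.max q1 q2) at 1 by lia.
Qed.

Lemma correct_on_has_slow_threshold t : forall lo hi,
  (lo <= hi)%nat -> (hi <= n)%nat -> correct_on t lo hi -> has_slow_threshold t lo hi.
Proof.
  induction t as [s | i t0 IH0 t1 IH1]; intros lo hi Hlohi Hhi Ht.
  { now apply has_slow_threshold_Out. }
  assert (Huniform : forall b : bool,
    (forall p, (lo <= p)%nat -> (p <= hi)%nat -> answer n (threshold p) i = b) ->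
    has_slow_threshold (Ask i t0 t1) lo hi).
  { intros b Hb; apply has_slow_threshold_Ask_uniform with b; auto.
    pose proof (correct_on_branch i t0 t1 lo hi b Hb Ht).
    destruct b; [apply IH1 | apply IH0]; auto. }
  destruct (Nat.leb 1 i && Nat.leb i n)%bool eqn:Hin.
  2: { apply (Huniform false); intros; now rewrite answer_threshold, Hin. }
  apply andb_prop in Hin as [Hi1 Hin]; apply Nat.leb_le in Hin.
  assert (Hans : forall p, answer n (threshold p) i = Nat.leb p i).
  { intros p; now rewrite answer_threshold, Hi1, (proj2 (Nat.leb_le i n) Hin). }
  destruct (Nat.lt_ge_cases i lo) as [Hilo | Hloi].
  { apply (Huniform false); intros p Hp _; rewrite Hans; apply Nat.leb_gt; lia. }
  destruct (Nat.lt_ge_cases i hi) as [Hihi | Hhii].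
  2: { apply (Huniform true); intros p _ Hp; rewrite Hans; apply Nat.leb_le; lia. }
  assert (Hyes : forall p, (lo <= p)%nat -> (p <= i)%nat -> answer n (threshold p) i = true).
  { intros p _ Hp; rewrite Hans; now apply Nat.leb_le. }
  assert (Hno : forall p, (i < p)%nat -> (p <= hi)%nat -> answer n (threshold p) i = false).
  { intros p Hp _; rewrite Hans; now apply Nat.leb_gt. }
  apply has_slow_threshold_Ask_split; auto.
  - apply IH1; [lia | lia |].
    apply (correct_on_branch i t0 t1 lo i true Hyes), (correct_on_sub _ lo hi); auto; lia.
  - apply IH0; [lia | lia |].
    apply (correct_on_branch i t0 t1 (S i) hi false Hno), (correct_on_sub _ lo hi); auto; lia.
Qed.

End Adversary.

Theorem theorem3 (d : R) (n : nat) (t : dtree) :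
  1 < d -> (1 <= n)%nat -> solves d n t ->
  exists X : nat -> bool,
    sorted_input n X /\ has_one n X /\
    log2 (log2 (INR n)) - log2 (log2 (d + 1)) <= INR (queries n X t).
Proof.
  intros Hd Hn Hsolves.
  assert (d_pos : 0 < d) by lra.
  destruct (correct_on_has_slow_threshold d n d_pos t 1 n Hn (le_n n)
              (solves_correct_on d n d_pos t Hsolves)) as [p [Hp1 [Hpn Hslow]]].
  exists (threshold p); split; [apply sorted_threshold|].
  split; [now apply has_one_threshold|].
  assert (Hn_le : INR n <= tower d (queries n (threshold p) t)).
  { simpl in Hslow; lra. }
  pose proof (log2_log2_le_of_le_pow_pow _ (d + 1) _ ltac:(lra) Hn_le); lra.
Qed.
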